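(* Let $\mathfrak{C}=(U,M,I,N,J)$ be a formal decision context, let $\mathfrak{R}_{I}(\mathfrak{C})$ be its set of I-decision rules, ordered by the rule implication relation $\Rightarrow$, and let $\overline{\mathfrak{R}}_{I}(\mathfrak{C})$ be its set of necessary I-decision rules. Then: (1) $(\mathfrak{R}_{I}(\mathfrak{C}),\Rightarrow)$ is a partially ordered set. That is: $r\Rightarrow r$ for every $r\in\mathfrak{R}_{I}(\mathfrak{C})$; $r_1\Rightarrow r_2$ and $r_2\Rightarrow r_1$ imply $r_1=r_2$; and $r_1\Rightarrow r_2$ and $r_2\Rightarrow r_3$ imply $r_1\Rightarrow r_3$. (2) $r\in\overline{\mathfrak{R}}_{I}(\mathfrak{C})$ if and only if, for every $r'\in\mathfrak{R}_{I}(\mathfrak{C})$, $r'\Rightarrow r$ implies $r'=r$. In other words, $r$ is a minimal element of $(\mathfrak{R}_{I}(\mathfrak{C}),\Rightarrow)$. (3) Suppose $O\in \mathrm{Ext}L_{O}(\mathfrak{C}_M)\cap \mathrm{Ext}L(\mathfrak{C}_N)$, $O\neq\emptyset$ and $O\neq U$. Then $(O,O^{\square_M})\in L_O(\mathfrak{C}_M)$, $(O,O^{\uparrow_N})\in L(\mathfrak{C}_N)$, and $(O,O^{\square_M})\rightarrow(O,O^{\uparrow_N})$ is a necessary I-decision rule.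
   Context: Formal context $(U,M,I)$: $U$ and $M$ are finite nonempty sets and $I\subseteq U\times M$. For $O\subseteq U$ and $C\subseteq M$ define: - $O^{\uparrow}=\{a\in M\mid \forall x\in O\,((x,a)\in I)\}$ and $C^{\downarrow}=\{x\in U\mid \forall a\in C\,((x,a)\in I)\}$; - $O^{\square}=\{a\in M\mid \forall x\in U\,((x,a)\in I\Rightarrow x\in O)\}$ and $C^{\lozenge}=\{x\in U\mid \exists a\in C\,((x,a)\in I)\}$. A formal concept is a pair $(O,C)$ with $O^\uparrow=C$ and $C^\downarrow=O$; the set of formal concepts is $L$. An object-oriented concept is a pair $(O,C)$ with $O^\square=C$ and $C^\lozenge=O$; the set of these is $L_O$. $\mathrm{Ext}$ denotes the set of first components (extents). Standing assumption: every formal context is canonical, i.e. for all $x\in U$ and $a\in M$ we have $\{x\}^\uparrow\ne\emptyset$, $\{x\}^\uparrow\ne M$, $\{a\}^\downarrow\ne\emptyset$ and $\{a\}^\downarrow\ne U$. A formal decision context $\mathfrak{C}=(U,M,I,N,J)$ consists of formal contexts $\mathfrak{C}_M=(U,M,I)$ (conditional) and $\mathfrak{C}_N=(U,N,J)$ (decision) with $M\cap N=\emptyset$. Operators computed in $\mathfrak{C}_M$ carry subscript $M$, and those computed in $\mathfrak{C}_N$ carry subscript $N$. An I-decision rule is $(O,C)\rightarrow(Y,D)$ with $(O,C)\in L_O(\mathfrak{C}_M)$, $(Y,D)\in L(\mathfrak{C}_N)$, $O\subseteq Y$, $O\ne\emptyset$ and $Y\ne U$. Implication between rules: $(O_1,C_1)\rightarrow(Y_1,D_1)\Rightarrow(O_2,C_2)\rightarrow(Y_2,D_2)$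 iff $O_2\subseteq O_1\subseteq Y_1\subseteq Y_2$. A rule $r$ is redundant if some rule $r_1\ne r$ in $\mathfrak{R}_I(\mathfrak{C})$ satisfies $r_1\Rightarrow r$; otherwise $r$ is necessary. *)

From mathcomp Require Import all_boot.
Set Implicit Arguments. Unset Strict Implicit. Unset Printing Implicit Defensive.

Section FCA.
Variables (U M : finType) (I : U -> M -> bool).

Definition up (X : {set U}) : {set M} := [set a | [forall x in X, I x a]].
Definition down (C : {set M}) : {set U} := [set x | [forall a in C, I x a]].
Definition box (X : {set U}) : {set M} := [set a | [forall x, I x a ==> (x \in X)]].
Definition dia (C : {set M}) : {set U} := [set x | [exists a in C, I x a]].

Definition is_concept (X : {set U}) (C : {set M}) : Prop := up X = C /\ down C = X.
Definition is_oconcept (X : {set U}) (C : {set M}) : Prop := box X = C /\ dia C = X.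

Definition in_ExtL (X : {set U}) : Prop := exists C, is_concept X C.
Definition in_ExtLO (X : {set U}) : Prop := exists C, is_oconcept X C.

Definition canonical_context : Prop :=
  (exists x : U, True) /\ (exists a : M, True) /\
  (forall x : U, up [set x] != set0 /\ up [set x] != setT) /\
  (forall a : M, down [set a] != set0 /\ down [set a] != setT).
End FCA.

(* A rule (X,C) -> (Y,D) is encoded as ((X,C),(Y,D)). *)
Definition rule (U M N : finType) : Type :=
  prod (prod {set U} {set M}) (prod {set U} {set N}).

Section Rules.
Variables (U M N : finType) (I : U -> M -> bool) (J : U -> N -> bool).

Definition is_Irule (r : rule U M N) : Prop :=
  let: ((X, C), (Y, D)) := r in
  is_oconcept I X C /\ is_concept J Y D /\ X \subset Y /\ X != set0 /\ Y != setT.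

Definition rule_imp (r1 r2 : rule U M N) : Prop :=
  let: ((X1, _), (Y1, _)) := r1 in
  let: ((X2, _), (Y2, _)) := r2 in
  X2 \subset X1 /\ X1 \subset Y1 /\ Y1 \subset Y2.

Definition redundant (r : rule U M N) : Prop :=
  exists r1, is_Irule r1 /\ r1 <> r /\ rule_imp r1 r.

Definition necessary (r : rule U M N) : Prop := is_Irule r /\ ~ redundant r.
End Rules.

(* The extents of a rule determine the whole rule (its intents are derived
   from them), and rule implication only compares extents by inclusion, so it
   is a partial order on I-decision rules and necessity is minimality.  A rule
   with both extents equal to O can only be implied by a rule whose extents are
   squeezed between O and O, i.e. by itself. *)
From mathcomp Require Import all_boot.

Set Implicit Arguments.
Unset Strict Implicit.
Unset Printing Implicit Defensive.

Section DecisionRules.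
Variables (U M N : finType) (I : U -> M -> bool) (J : U -> N -> bool).

Lemma oconcept_box (X : {set U}) : in_ExtLO I X -> is_oconcept I X (box I X).
Proof. by case=> C [boxX diaC]; split; rewrite // boxX. Qed.

Lemma concept_up (X : {set U}) : in_ExtL J X -> is_concept J X (up J X).
Proof. by case=> D [upX downD]; split; rewrite // upX. Qed.

Lemma Irule_ext_inj (r1 r2 : rule U M N) :
  is_Irule I J r1 -> is_Irule I J r2 ->
  r1.1.1 = r2.1.1 -> r1.2.1 = r2.2.1 -> r1 = r2.
Proof.
case: r1 => [[X1 C1] [Y1 D1]]; case: r2 => [[X2 C2] [Y2 D2]] /=.
by move=> [[<- _] [[<- _] _]] [[<- _] [[<- _] _]] -> ->.
Qed.

Lemma rule_imp_refl (r : rule U M N) : is_Irule I J r -> rule_imp r r.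
Proof. by case: r => [[X C] [Y D]] [_ [_ [subXY _]]] /=; rewrite !subxx. Qed.

Lemma rule_imp_anti (r1 r2 : rule U M N) :
  is_Irule I J r1 -> is_Irule I J r2 ->
  rule_imp r1 r2 -> rule_imp r2 r1 -> r1 = r2.
Proof.
move=> Ir1 Ir2 imp12 imp21.
suff [ext1 ext2] : r1.1.1 = r2.1.1 /\ r1.2.1 = r2.2.1 by apply: Irule_ext_inj.
move: imp12 imp21 {Ir1 Ir2}.
case: r1 r2 => [[X1 C1] [Y1 D1]] [[X2 C2] [Y2 D2]] /= [sX21 [_ sY12]] [sX12 [_ sY21]].
by split; apply/eqP; rewrite eqEsubset ?sX12 ?sY12.
Qed.

Lemma rule_imp_trans (r1 r2 r3 : rule U M N) :
  rule_imp r1 r2 -> rule_imp r2 r3 -> rule_imp r1 r3.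
Proof.
case: r1 r2 r3 => [[X1 C1] [Y1 D1]] [[X2 C2] [Y2 D2]] [[X3 C3] [Y3 D3]] /=.
move=> [sX21 [sXY1 sY12]] [sX32 [_ sY23]].
by split; [apply: subset_trans sX21 | split=> //; apply: subset_trans sY23].
Qed.

Lemma necessaryP (r : rule U M N) : is_Irule I J r ->
  necessary I J r <-> (forall r', is_Irule I J r' -> rule_imp r' r -> r' = r).
Proof.
move=> Ir; split=> [[_ not_red] r' Ir' imp_r'r | minr].
  by case: (r' =P r) => // neq_r'r; case: not_red; exists r'.
by split=> // -[r' [Ir' [neq_r'r imp_r'r]]]; apply/neq_r'r/minr.
Qed.

Lemma rule_imp_diag (r : rule U M N) (X : {set U}) C D :
  rule_imp r ((X, C), (X, D)) -> r.1.1 = X /\ r.2.1 = X.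
Proof.
case: r => [[X1 C1] [Y1 D1]] /= [sXX1 [sX1Y1 sY1X]].
split; apply/eqP; rewrite eqEsubset ?sXX1 ?sY1X ?andbT //.
  exact: subset_trans sX1Y1 sY1X.
exact: subset_trans sXX1 sX1Y1.
Qed.

Lemma diag_rule_necessary (X : {set U}) :
  in_ExtLO I X -> in_ExtL J X -> X != set0 -> X != setT ->
  necessary I J ((X, box I X), (X, up J X)).
Proof.
move=> extLO extL X_neq0 X_neqT.
have Ir : is_Irule I J ((X, box I X), (X, up J X)).
  by split; [exact: oconcept_box | split; [exact: concept_up | rewrite subxx]].
apply/necessaryP => // r Ir' /rule_imp_diag [ext1 ext2].
exact: Irule_ext_inj Ir' Ir ext1 ext2.
Qed.

End DecisionRules.

Theorem theorem3p4 (U M N : finType) (I : U -> M -> bool) (J : U -> N -> bool)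
  (canM : canonical_context I) (canN : canonical_context J) :
  (* (1) partial order on R_I(C) *)
  ((forall r, is_Irule I J r -> rule_imp r r) /\
   (forall r1 r2, is_Irule I J r1 -> is_Irule I J r2 ->
      rule_imp r1 r2 -> rule_imp r2 r1 -> r1 = r2) /\
   (forall r1 r2 r3, is_Irule I J r1 -> is_Irule I J r2 -> is_Irule I J r3 ->
      rule_imp r1 r2 -> rule_imp r2 r3 -> rule_imp r1 r3)) /\
  (* (2) necessary = minimal *)
  (forall r, is_Irule I J r ->
     (necessary I J r <->
      (forall r', is_Irule I J r' -> rule_imp r' r -> r' = r))) /\
  (* (3) *)
  (forall X : {set U}, in_ExtLO I X -> in_ExtL J X -> X != set0 -> X != setT ->
     is_oconcept I X (box I X) /\ is_concept J X (up J X) /\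
     necessary I J ((X, box I X), (X, up J X))).
Proof.
split; [split; [|split] | split].
- exact: rule_imp_refl.
- exact: rule_imp_anti.
- by move=> r1 r2 r3 _ _ _; apply: rule_imp_trans.
- exact: necessaryP.
- move=> X extLO extL X_neq0 X_neqT.
  by split; [exact: oconcept_box | split; [exact: concept_up | exact: diag_rule_necessary]].
Qed.
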